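(* For $X=\sum_{p,q}x_{p,q}a^pb^q\in\tilde{\mathcal{A}}_{conv.}$ and $f(z)=\sum_{m\ge0}t_mz^m\in\mathbb{C}\{z\}$ define $$X(f):=\sum_{m\ge0}u_mz^m,\qquad u_m:=\sum_{p+q+r=m}\frac{r!}{(q+r)!}x_{p,q}t_r.$$ Then $X(f)\in\mathbb{C}\{z\}$. The corresponding map of $\mathbb{C}$-algebras from $\tilde{\mathcal{A}}_{conv.}$ to the algebra of continuous endomorphisms of $\mathbb{C}\{z\}$ is continuous and injective.
   Context: $\tilde{\mathcal{A}}_{conv.}$ is the algebra of formal series $\sum\gamma_{p,q}a^pb^q$ in variables $a,b$ with $ab-ba=b^2$ (product extending that of the polynomial algebra with this relation) such that $|\gamma_{p,q}|\le C_RR^{p+q}q!$ for some $R>1$, $C_R>0$, with its natural inductive limit topology (over the Banach spaces defined by these bounds). The formula corresponds to letting $a$ act on $\mathbb{C}\{z\}$ as multiplication by $z$ and $b$ as the primitive vanishing at $0$. *)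

From mathcomp Require Import all_boot all_order all_algebra.
From mathcomp Require Import reals complex.
Set Implicit Arguments. Unset Strict Implicit. Unset Printing Implicit Defensive.
Import Order.TTheory GRing.Theory Num.Theory.
Local Open Scope ring_scope.

(* An element X = sum x_{p,q} a^p b^q of the formal algebra is represented by
   its coefficient family x : nat -> nat -> R[i].
   A power series f = sum t_m z^m is represented by t : nat -> R[i]. *)

Definition Abound (R : realType) (Rr c : R) (x : nat -> nat -> R[i]) : Prop :=
  forall p q : nat, `|x p q| <= (c * Rr ^+ (p + q) * (q`!)%:R)%:C%C.

Definition inAconv (R : realType) (x : nat -> nat -> R[i]) : Prop :=
  exists Rr : R, 1 < Rr /\ exists c : R, 0 < c /\ Abound Rr c x.

Definition Zbound (R : realType) (r c : R) (t : nat -> R[i]) : Prop :=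
  forall m : nat, `|t m| * (r ^+ m)%:C%C <= c%:C%C.

Definition conv (R : realType) (t : nat -> R[i]) : Prop :=
  exists r : R, 0 < r /\ exists c : R, Zbound r c t.

Definition act (R : realType) (x : nat -> nat -> R[i]) (t : nat -> R[i])
    (m : nat) : R[i] :=
  \sum_(p < m.+1) \sum_(q < (m - p).+1)
     ((m - p - q)`!)%:R / ((m - p)`!)%:R * x p q * t (m - p - q)%N.

Definition rfact (q k : nat) : nat := \prod_(i < k) (q + i).

(* Product in A~ (relation ab - ba = b^2): using the normal-ordering identity
   b^q a^s = sum_k (-1)^k C(s,k) rfact q k a^(s-k) b^(q+k),
   the coefficient of a^i b^j in X*Y is
   sum_{p<=i, k<=j, q<=j-k} x_{p,q} y_{i+k-p, j-q-k} (-1)^k C(i+k-p,k) rfact q k. *)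
Definition mulAt (R : realType) (x y : nat -> nat -> R[i]) (i j : nat) : R[i] :=
  \sum_(p < i.+1) \sum_(k < j.+1) \sum_(q < (j - k).+1)
     x p q * y (i + k - p)%N (j - q - k)%N *
     ((-1) ^+ k * ('C(i + k - p, k) * rfact q k)%:R).

(* Write w(q, r) = r!/(q + r)!, so that b^q z^r = w(q, r) z^(q + r) and u_m is the sum
   of x_{p,q} t_r w(q, r) over p + q + r = m.

   Convergence and continuity: w(q, r) q! <= 1, so with R r' <= 1/4 and r' <= r/4 each
   term of u_m r'^m is at most c_X c_f 4^-m, while u_m has at most (m + 1)^2 <= 4^m terms.

   Morphism: expanding both sides coefficientwise, the identity reduces to the normal
   ordering of b^q a^s applied to z^r, i.e.
     sum_k (-1)^k C(s, k) q(q+1)...(q+k-1) w(q + k, r) = w(q, r + s),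
   which follows by induction on s from w(n, r) - w(n, r + 1) = n w(n + 1, r).

   Injectivity: the coefficient of z^(n + r) in X(z^r) is sum_q x_{n-q,q} w(q, r).  If it
   vanishes for all r, multiplying by (r + n)!/r! gives a polynomial in r vanishing on N,
   hence zero; its value at r = -n is x_{0,n}, and induction on n does the rest. *)

From mathcomp Require Import all_boot all_order all_algebra.
From mathcomp Require Import reals complex.
Import Order.TTheory GRing.Theory Num.Theory.
Set Implicit Arguments. Unset Strict Implicit. Unset Printing Implicit Defensive.
Local Open Scope ring_scope.
From mathcomp Require Import zify ring lra.
From Stdlib Require Import FunctionalExtensionality.

Section NestedSums.
Variable V : nmodType.

Lemma sum_ord_widen n N (F : nat -> V) : (n <= N)%N ->
  \sum_(i < n) F i = \sum_(i < N) (if (i < n)%N then F i else 0).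
Proof. by move=> h; rewrite (big_ord_widen N F h) big_mkcond. Qed.

Lemma sum_ord_widen_inord n N (G : 'I_n.+1 -> V) : (n < N)%N ->
  \sum_(i < n.+1) G i = \sum_(i < N) (if (i < n.+1)%N then G (inord i) else 0).
Proof.
move=> h; rewrite -(@sum_ord_widen n.+1 N (fun i => G (inord i)) h).
by apply: eq_bigr => i _; rewrite inord_val.
Qed.

Lemma sum_ord_single N (G : 'I_N -> V) j (hj : (j < N)%N) :
  (forall i : 'I_N, (i : nat) <> j -> G i = 0) -> \sum_i G i = G (Ordinal hj).
Proof.
move=> h; rewrite (bigD1 (Ordinal hj)) //= big1 ?addr0 // => i hi; apply: h => e.
by move: hi; rewrite -val_eqE /= e eqxx.
Qed.

Lemma sum_ord_rot5 N (F : 'I_N -> 'I_N -> 'I_N -> 'I_N -> 'I_N -> V) :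
  \sum_(a < N) \sum_(b < N) \sum_(c < N) \sum_(d < N) \sum_(e < N) F a b c d e =
  \sum_(b < N) \sum_(c < N) \sum_(d < N) \sum_(e < N) \sum_(a < N) F a b c d e.
Proof.
rewrite exchange_big; apply: eq_bigr => b _; rewrite exchange_big.
apply: eq_bigr => c _; rewrite exchange_big; apply: eq_bigr => d _.
by rewrite exchange_big.
Qed.

Lemma sum_ord_rot8 N
    (F : 'I_N -> 'I_N -> 'I_N -> 'I_N -> 'I_N -> 'I_N -> 'I_N -> 'I_N -> V) :
  \sum_(a < N) \sum_(b < N) \sum_(c < N) \sum_(d < N) \sum_(e < N) \sum_(f < N)
    \sum_(g < N) \sum_(h < N) F a b c d e f g h =
  \sum_(b < N) \sum_(c < N) \sum_(d < N) \sum_(e < N) \sum_(f < N)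
    \sum_(g < N) \sum_(h < N) \sum_(a < N) F a b c d e f g h.
Proof.
rewrite exchange_big; apply: eq_bigr => b _; rewrite exchange_big.
apply: eq_bigr => c _; rewrite exchange_big; apply: eq_bigr => d _.
rewrite exchange_big; apply: eq_bigr => e _; rewrite exchange_big.
apply: eq_bigr => f _; rewrite exchange_big; apply: eq_bigr => g _.
by rewrite exchange_big.
Qed.

End NestedSums.

Lemma rfactS q k : rfact q k.+1 = (rfact q k * (q + k))%N.
Proof. by rewrite /rfact big_ord_recr. Qed.

Lemma rfact_fact c d : (rfact c.+1 d * c`!)%N = (c + d)`!.
Proof.
elim: d => [|d IH]; first by rewrite /rfact big_ord0 mul1n addn0.
by rewrite rfactS mulnAC IH addnS factS mulnC addSn.
Qed.

Lemma sq_le_pow4 m : (m.+1 * m.+1 <= 4 ^ m)%N.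
Proof. by rewrite (_ : 4 = 2 * 2)%N // expnMn leq_mul // ltn_expl. Qed.

Section PrimitiveWeights.
Context {F : numFieldType}.

Lemma natr_fact_neq0 n : (n`!)%:R != 0 :> F.
Proof. by rewrite pnatr_eq0 -lt0n fact_gt0. Qed.

(* [b^q z^r = prim_weight q r * z^(q + r)] *)
Definition prim_weight (q r : nat) : F := (r`!)%:R / ((q + r)`!)%:R.

Lemma prim_weight_diff n r :
  prim_weight n r - prim_weight n r.+1 = n%:R * prim_weight n.+1 r.
Proof.
rewrite /prim_weight addSn addnS !factS !natrM.
have := natr_fact_neq0 (n + r).
have : (n + r).+1%:R != 0 :> F by rewrite pnatr_eq0.
rewrite -addn1 !natrD => ? ?.
by field; apply/andP.
Qed.

Lemma prim_weight_comp a u r :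
  prim_weight a (u + r) * prim_weight u r = prim_weight (a + u) r.
Proof.
by rewrite /prim_weight addnA mulrC mulrA divfK ?natr_fact_neq0.
Qed.

Lemma prim_weight_ge0 q r : 0 <= prim_weight q r.
Proof. by rewrite divr_ge0 ?ler0n. Qed.

Lemma prim_weight_fact_le1 q r : prim_weight q r * q`!%:R <= 1.
Proof.
have hf : 0 < ((q + r)`!)%:R :> F by rewrite ltr0n fact_gt0.
rewrite mulrAC ler_pdivrMr // mul1r -natrM ler_nat.
have := bin_fact (leq_addr r q); rewrite addKn => <-.
by rewrite mulnC leq_pmull // bin_gt0 leq_addr.
Qed.

(* The coefficients of the normal ordering b^q a^s = sum_k (-1)^k C(s, k) rfact q k
   a^(s-k) b^(q+k) used in [mulAt], applied to z^r. *)
Definition normal_order_weight (q s r : nat) : F :=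
  \sum_(k < s.+1) (-1) ^+ k * ('C(s, k) * rfact q k)%:R * prim_weight (q + k) r.

Lemma normal_order_weightS q s r :
  normal_order_weight q s.+1 r = normal_order_weight q s r.+1.
Proof.
pose c k : F := (-1) ^+ k * ('C(s, k) * rfact q k)%:R * prim_weight (q + k) r.
pose c' k : F := if k is j.+1 then
  (-1) ^+ k * ('C(s, j) * rfact q k)%:R * prim_weight (q + k) r else 0.
have -> : normal_order_weight q s.+1 r = \sum_(k < s.+2) (c k + c' k).
  apply: eq_bigr => -[[|k] hk] _ /=; rewrite /c /c'; first by rewrite !bin0 addr0.
  by rewrite binS mulnDl natrD mulrDr mulrDl.
have -> : normal_order_weight q s r.+1 = \sum_(k < s.+1) c k + \sum_(k < s.+1) c' k.+1.
  rewrite -big_split; apply: eq_bigr => k _ /=; rewrite /c /c'.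
  move/eqP: (prim_weight_diff (q + k) r); rewrite subr_eq => /eqP ->.
  by rewrite rfactS addnS exprS !natrM; ring.
rewrite big_split /=; congr (_ + _).
  by rewrite big_ord_recr /= {2}/c bin_small // mul0n mulr0 mul0r addr0.
by rewrite big_ord_recl add0r.
Qed.

Lemma normal_order_weightE q s r : normal_order_weight q s r = prim_weight q (r + s).
Proof.
elim: s r => [|s IH] r; last by rewrite normal_order_weightS IH addSnnS.
by rewrite /normal_order_weight big_ord1 /rfact big_ord0 bin0 !addn0 mulr1 mul1r.
Qed.

Definition rfact_poly (c d : nat) : {poly F} := \prod_(j < d) ('X + (c + j)%:R%:P).

Lemma rfact_poly_root c d j : (j < d)%N -> (rfact_poly c d).[- (c + j)%:R] = 0.
Proof.
move=> hj; rewrite /rfact_poly horner_prod (bigD1 (Ordinal hj)) //=.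
by rewrite hornerD hornerX hornerC addNr mul0r.
Qed.

Lemma horner_rfact_poly_weight q n r : (q <= n)%N ->
  (rfact_poly q.+1 (n - q)).[r%:R] = (r + n)`!%:R / r`!%:R * prim_weight q r.
Proof.
move=> hqn; rewrite horner_prod /prim_weight.
under eq_bigr do rewrite hornerD hornerX hornerC -natrD.
rewrite -natr_prod.
have -> : \prod_(j < n - q) (r + (q.+1 + j))%N = rfact (r + q).+1 (n - q).
  by apply: eq_bigr => j _; rewrite addnA addnS.
have : ((rfact (r + q).+1 (n - q) * (r + q)`!)%N = (r + n)`!).
  by rewrite rfact_fact -addnA subnKC.
move/(congr1 (fun k => k%:R : F)); rewrite natrM => <-.
have := natr_fact_neq0 r; have := natr_fact_neq0 (r + q).
by rewrite addnC => ? ?; field; apply/andP.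
Qed.

Lemma poly_nat_roots_eq0 (P : {poly F}) : (forall k : nat, P.[k%:R] = 0) -> P = 0.
Proof.
move=> hP; apply: (@roots_geq_poly_eq0 _ _ [seq k%:R | k <- iota 0 (size P)]).
- by apply/allP => z /mapP [k _ ->]; apply/rootP.
- by rewrite map_inj_uniq ?iota_uniq // => i j /eqP; rewrite eqr_nat => /eqP.
- by rewrite size_map size_iota.
Qed.

Lemma prim_weight_lin_indep n (a : nat -> F) :
  (forall r, \sum_(q < n) a q * prim_weight q r = 0) -> forall q, (q < n)%N -> a q = 0.
Proof.
elim: n => [|n IH] ha q0 hq0 //.
pose P := \sum_(q < n.+1) a q *: rfact_poly q.+1 (n - q).
have P0 : P = 0.
  apply: poly_nat_roots_eq0 => r.
  rewrite horner_sum (eq_bigr (fun q : 'I_n.+1 =>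
    (r + n)`!%:R / r`!%:R * (a q * prim_weight q r))); last first.
    move=> q _; have hq : (q <= n)%N := ltn_ord q.
    by rewrite hornerZ horner_rfact_poly_weight // mulrCA.
  by rewrite -mulr_sumr ha mulr0.
have an : a n = 0.
  (* Every summand of P but the last vanishes at -n. *)
  have := congr1 (horner^~ (- n%:R)) P0.
  rewrite horner0 horner_sum big_ord_recr /= subnn big1 ?add0r; last first.
    move=> q _; have hq := ltn_ord q.
    have hj : (n - q - 1 < n - q)%N by lia.
    have e : (q.+1 + (n - q - 1) = n)%N by lia.
    by move: (rfact_poly_root q.+1 hj); rewrite e hornerZ => ->; rewrite mulr0.
  by rewrite hornerZ /rfact_poly big_ord0 hornerC mulr1.
have {}ha r : \sum_(q < n) a q * prim_weight q r = 0.
  by have := ha r; rewrite big_ord_recr /= an mul0r addr0.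
by case: (ltnP q0 n) => hq; [exact: IH | have -> : q0 = n by lia].
Qed.

End PrimitiveWeights.

Section Action.
Variable R : realType.
Local Notation C := R[i].
Implicit Types (x y : nat -> nat -> C) (t : nat -> C).

Lemma actE x t m : act x t m =
  \sum_(p < m.+1) \sum_(q < (m - p).+1) x p q * t (m - p - q)%N * prim_weight q (m - p - q).
Proof.
apply: eq_bigr => p _; apply: eq_bigr => q _.
have hq : (q <= m - p)%N by rewrite -ltnS.
by rewrite /prim_weight subnKC // [RHS]mulrC mulrA.
Qed.

Lemma act_act_guarded x y t m : act x (act y t) m =
  \sum_(p < m.+1) \sum_(q < m.+1) \sum_(s < m.+1) \sum_(u < m.+1) \sum_(r < m.+1)
    (if (p + q + s + u + r == m)%N then
       x p q * y s u * t r * (prim_weight q (s + u + r) * prim_weight u r) else 0).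
Proof.
rewrite actE; apply: eq_bigr => p _; have hp := ltn_ord p.
rewrite (sum_ord_widen_inord (N := m.+1)); last lia.
apply: eq_bigr => q _; have hq' := ltn_ord q.
case: ifP => hq; rewrite ?inordK //; last first.
  by symmetry; do 3 (apply: big1 => ? _); apply: ifF; lia.
rewrite actE mulr_sumr mulr_suml (sum_ord_widen_inord (N := m.+1)); last lia.
apply: eq_bigr => s _; have hs' := ltn_ord s.
case: ifP => hs; rewrite ?inordK //; last first.
  by symmetry; do 2 (apply: big1 => ? _); apply: ifF; lia.
rewrite mulr_sumr mulr_suml (sum_ord_widen_inord (N := m.+1)); last lia.
apply: eq_bigr => u _; have hu' := ltn_ord u.
case: ifP => hu; rewrite ?inordK //; last first.
  by symmetry; apply: big1 => ? _; apply: ifF; lia.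
have hr : (m - p - q - s - u < m.+1)%N by lia.
rewrite (sum_ord_single hr) /=; last by move=> r hr'; apply: ifF; lia.
rewrite ifT; last lia.
set r := (m - p - q - s - u)%N.
have -> : (m - p - q = s + u + r)%N by lia.
ring.
Qed.

Lemma act_mulAt_guarded x y t m : act (mulAt x y) t m =
  \sum_(i < m.+1) \sum_(j < m.+1) \sum_(p < m.+1) \sum_(k < m.+1) \sum_(q < m.+1)
  \sum_(s < m.+1) \sum_(u < m.+1) \sum_(r < m.+1)
    (if [&& i + j + r == m, p <= i, k <= j, q + k <= j, s + p == i + k
          & u + q + k == j]%N then
       x p q * y s u * t r *
       ((-1) ^+ k * ('C(s, k) * rfact q k)%:R * prim_weight (q + k + u) r) else 0).
Proof.
rewrite actE; apply: eq_bigr => i _; have hi := ltn_ord i.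
rewrite (sum_ord_widen_inord (N := m.+1)); last lia.
apply: eq_bigr => j _; have hj' := ltn_ord j.
case: ifP => hj; rewrite ?inordK //; last first.
  by symmetry; do 6 (apply: big1 => ? _); apply: ifF; lia.
rewrite /mulAt 2!mulr_suml (sum_ord_widen_inord (N := m.+1)); last lia.
apply: eq_bigr => p _; have hp' := ltn_ord p.
case: ifP => hp; rewrite ?inordK //; last first.
  by symmetry; do 5 (apply: big1 => ? _); apply: ifF; lia.
rewrite 2!mulr_suml (sum_ord_widen_inord (N := m.+1)); last lia.
apply: eq_bigr => k _; have hk' := ltn_ord k.
case: ifP => hk; rewrite ?inordK //; last first.
  by symmetry; do 4 (apply: big1 => ? _); apply: ifF; lia.
rewrite 2!mulr_suml (sum_ord_widen_inord (N := m.+1)); last lia.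
apply: eq_bigr => q _; have hq' := ltn_ord q.
case: ifP => hq; rewrite ?inordK //; last first.
  by symmetry; do 3 (apply: big1 => ? _); apply: ifF; lia.
have hs : (i + k - p < m.+1)%N by lia.
rewrite (sum_ord_single hs) /=; last first.
  by move=> s hs'; do 2 (apply: big1 => ? _); apply: ifF; lia.
have hu : (j - q - k < m.+1)%N by lia.
rewrite (sum_ord_single hu) /=; last first.
  by move=> u hu'; apply: big1 => ? _; apply: ifF; lia.
have hr : (m - i - j < m.+1)%N by lia.
rewrite (sum_ord_single hr) /=; last by move=> r hr'; apply: ifF; lia.
rewrite ifT; last lia.
have -> : (q + k + (j - q - k) = j)%N by lia.
ring.
Qed.

Lemma act_mulAt x y t m : act (mulAt x y) t m = act x (act y t) m.
Proof.
rewrite act_mulAt_guarded act_act_guarded 2!sum_ord_rot8; apply: eq_bigr => p _.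
rewrite sum_ord_rot5; apply: eq_bigr => q _; apply: eq_bigr => s _.
apply: eq_bigr => u _; apply: eq_bigr => r _.
have hp := ltn_ord p; have hq := ltn_ord q; have hs := ltn_ord s.
have hu := ltn_ord u; have hr := ltn_ord r.
case: ifP => hm; last by do 3 (apply: big1 => ? _); apply: ifF; lia.
pose c k : C := x p q * y s u * t r * ((-1) ^+ k * ('C(s, k) * rfact q k)%:R *
  prim_weight (q + k) (u + r) * prim_weight u r).
transitivity (\sum_(k < m.+1) if (k < s.+1)%N then c k else 0).
  apply: eq_bigr => k _; have hk := ltn_ord k.
  case: ifP => hks; last by do 2 (apply: big1 => ? _); apply: ifF; lia.
  have hi : (s + p - k < m.+1)%N by lia.
  rewrite (sum_ord_single hi) /=; last first.
    by move=> i hi'; apply: big1 => ? _; apply: ifF; lia.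
  have hj : (u + q + k < m.+1)%N by lia.
  rewrite (sum_ord_single hj) /=; last by move=> j hj'; apply: ifF; lia.
  by rewrite ifT ?/c -?prim_weight_comp ?mulrA //; lia.
rewrite -(sum_ord_widen (N := m.+1) c) /c; last lia.
rewrite -mulr_sumr -mulr_suml -/(normal_order_weight q s (u + r)).
by rewrite normal_order_weightE addnC addnA.
Qed.

Lemma act_indicator x (n r : nat) :
  act x (fun k => if k == r then 1 else 0) (n + r) =
  \sum_(q < n.+1) x (n - q)%N q * prim_weight q r.
Proof.
have -> : \sum_(q < n.+1) x (n - q)%N q * prim_weight q r =
          \sum_(p < n.+1) x p (n - p)%N * prim_weight (n - p) r.
  rewrite (reindex_inj rev_ord_inj); apply: eq_bigr => p _ /=.
  by rewrite subSS subKn // -ltnS.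
rewrite actE (sum_ord_widen (N := (n + r).+1)
  (fun p => x p (n - p)%N * prim_weight (n - p) r)); last lia.
apply: eq_bigr => p _; have hp := ltn_ord p; case: ifP => hpn; last first.
  by apply: big1 => q _; rewrite ifF ?mulr0 ?mul0r //; lia.
have hq : (n - p < (n + r - p).+1)%N by lia.
rewrite (sum_ord_single hq) /=; last first.
  by move=> q hqn; have hq' := ltn_ord q; rewrite ifF ?mulr0 ?mul0r //; lia.
by rewrite (_ : (n + r - p - (n - p) = r)%N) ?eqxx ?mulr1 //; lia.
Qed.

End Action.

Section Bounds.
Variable R : realType.
Local Notation C := R[i].
Local Open Scope complex_scope.
Implicit Types (x : nat -> nat -> C) (t : nat -> C).

(* Chosen so that [Rr * r' <= 1/4] and [r' / r <= 1/4]. *)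
Definition act_radius (Rr r : R) : R := r / (4 * (1 + Rr * r)).

Lemma act_radius_gt0 Rr r : 1 < Rr -> 0 < r -> 0 < act_radius Rr r.
Proof. by move=> hR hr; rewrite divr_gt0 // mulr_gt0 //; nra. Qed.

Lemma act_term_le (Rr r r' cx ct : R) p q n :
  0 < r -> 0 <= r' -> 0 <= Rr -> 0 <= cx -> 0 <= ct ->
  Rr * r' <= 4^-1 -> r' / r <= 4^-1 ->
  prim_weight q n * (cx * Rr ^+ (p + q) * q`!%:R) * (ct / r ^+ n) * r' ^+ (p + q + n)
    <= cx * ct * 4^-1 ^+ (p + q + n).
Proof.
move=> hr hr' hR hcx hct hRr' hr'r.
have hrn : r ^+ n != 0 by rewrite expf_neq0 // gt_eqF.
rewrite (_ : _ * r' ^+ _ = prim_weight q n * q`!%:R * (cx * ct) *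
  ((Rr * r') ^+ (p + q) * (r' / r) ^+ n)); last first.
  by rewrite exprMn expr_div_n (exprD r'); field.
rewrite -[X in _ <= X]mul1r mulrA [_ ^+ (p + q + n)]exprD; apply: ler_pM.
- by rewrite !mulr_ge0 ?invr_ge0 ?ler0n.
- by rewrite mulr_ge0 ?exprn_ge0 ?mulr_ge0 ?invr_ge0 // ltW.
- by rewrite ler_wpM2r ?mulr_ge0 ?prim_weight_fact_le1.
- by rewrite ler_pM ?exprn_ge0 ?lerXn2r ?nnegrE ?mulr_ge0 ?divr_ge0 ?invr_ge0 // ltW.
Qed.

Lemma prim_weight_realC q n : (prim_weight q n : C) = (prim_weight q n : R)%:C.
Proof. by rewrite /prim_weight fmorph_div !rmorph_nat. Qed.

Lemma Zbound_norm_le (r c : R) t n : 0 < r -> Zbound r c t -> `|t n| <= (c / r ^+ n)%:C.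
Proof.
move=> hr ht; rewrite fmorph_div ler_pdivlMr ?ltcR ?exprn_gt0 //; exact: ht.
Qed.

Lemma norm_act_le (Rr r cx ct : R) x t m : 0 < r -> Abound Rr cx x -> Zbound r ct t ->
  `|act x t m| <= (\sum_(p < m.+1) \sum_(q < (m - p).+1) prim_weight q (m - p - q) *
                    (cx * Rr ^+ (p + q) * q`!%:R) * (ct / r ^+ (m - p - q)))%:C.
Proof.
move=> hr hx ht; rewrite actE rmorph_sum; apply: le_trans (ler_norm_sum _ _ _) _.
apply: ler_sum => p _; rewrite rmorph_sum; apply: le_trans (ler_norm_sum _ _ _) _.
apply: ler_sum => q _; rewrite normrM [`|x p q * _|]normrM 2!rmorphM /=.
rewrite -prim_weight_realC (ger0_norm (prim_weight_ge0 _ _)) mulrC mulrA.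
apply: ler_pM.
- exact: mulr_ge0 (prim_weight_ge0 _ _) (normr_ge0 _).
- exact: normr_ge0.
- by apply: ler_wpM2l; [exact: prim_weight_ge0 | exact: hx].
- exact: Zbound_norm_le.
Qed.

Lemma sum_triangle_le (K : R) m : 0 <= K ->
  \sum_(p < m.+1) \sum_(q < (m - p).+1) K <= K * 4 ^+ m.
Proof.
move=> hK; apply: (@le_trans _ _ (\sum_(p < m.+1) K *+ m.+1)).
  apply: ler_sum => p _; rewrite sumr_const card_ord.
  by apply: ler_wpMn2l; rewrite // ltnS leq_subr.
rewrite sumr_const card_ord -mulrnA -(mulr_natr K) ler_wpM2l //.
by rewrite -natrX ler_nat sq_le_pow4.
Qed.

Lemma act_Zbound (Rr r cx ct : R) x t : 1 < Rr -> 0 < r ->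
  Abound Rr cx x -> Zbound r ct t -> Zbound (act_radius Rr r) (cx * ct) (act x t).
Proof.
move=> hR hr hx ht m; set r' := act_radius Rr r.
have hcx : 0 <= cx.
  by have := le_trans (normr_ge0 _) (hx 0%N 0%N); rewrite !expr0 !mulr1 ler0c.
have hct : 0 <= ct.
  have := ht 0%N; rewrite expr0 rmorph1 mulr1 => /(le_trans (normr_ge0 _)).
  by rewrite ler0c.
have hD : 0 < 4 * (1 + Rr * r) by rewrite mulr_gt0 //; nra.
have hr' : 0 <= r' by rewrite ltW ?act_radius_gt0.
have hRr' : Rr * r' <= 4^-1 by rewrite /r' /act_radius mulrA ler_pdivrMr //; nra.
have hr'r : r' / r <= 4^-1 by rewrite ler_pdivrMr // ler_pdivrMr //; nra.
apply: le_trans (ler_wpM2r _ (norm_act_le m hr hx ht)) _; first by rewrite ler0c exprn_ge0.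
rewrite -rmorphM lecR mulr_suml.
apply: (@le_trans _ _ (\sum_(p < m.+1) \sum_(q < (m - p).+1) cx * ct * 4^-1 ^+ m)).
  apply: ler_sum => p _; rewrite mulr_suml; apply: ler_sum => q _.
  have hm : (p + q + (m - p - q) = m)%N by have := ltn_ord p; have := ltn_ord q; lia.
  by rewrite -[in r' ^+ m]hm -[in 4^-1 ^+ m]hm act_term_le // ltW // (lt_trans ltr01).
apply: le_trans (sum_triangle_le _ _) _; first by rewrite !mulr_ge0 ?exprn_ge0 ?invr_ge0.
by rewrite -mulrA -exprMn mulVf ?expr1n ?mulr1 // pnatr_eq0.
Qed.

End Bounds.

Theorem lemma1p1p5 (R : realType) :
  (* X(f) is a convergent power series *)
  (forall (x : nat -> nat -> R[i]) (t : nat -> R[i]),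
      inAconv x -> conv t -> conv (act x t)) /\
  (* continuity (of each X(.) on C{z} and of X |-> X(.)), stated on the
     Banach steps: for every step Rr > 1 of A~_conv and every radius r > 0
     there are a radius r' > 0 and a constant K with
     ||X(f)||_{r'} <= K ||X||_Rr ||f||_r *)
  (forall Rr r : R, 1 < Rr -> 0 < r ->
     exists r' : R, 0 < r' /\ exists K : R, 0 < K /\
       forall (x : nat -> nat -> R[i]) (t : nat -> R[i]) (cx ct : R),
         Abound Rr cx x -> Zbound r ct t -> Zbound r' (K * cx * ct) (act x t)) /\
  (* it is a morphism for the product of A~_conv *)
  (forall (x y : nat -> nat -> R[i]) (t : nat -> R[i]),
      inAconv x -> inAconv y -> conv t ->
      act (mulAt x y) t = act x (act y t)) /\
  (* injectivity *)
  (forall x : nat -> nat -> R[i],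
      inAconv x -> (forall t : nat -> R[i], conv t -> act x t = (fun _ => 0)) ->
      x = (fun _ _ => 0)).
Proof.
have conv_indicator r : conv (fun k => if k == r then 1 else 0 : R[i]).
  exists 1; split; first exact: ltr01.
  exists 1 => k; rewrite expr1n mulr1.
  by case: (k == r); rewrite ?normr1 ?normr0 ?ler01.
split; [|split; [|split]].
- move=> x t [Rr [hR [cx [_ hx]]]] [r [hr [ct ht]]].
  exists (act_radius Rr r); split; first exact: act_radius_gt0.
  by exists (cx * ct); apply: act_Zbound.
- move=> Rr r hR hr; exists (act_radius Rr r); split; first exact: act_radius_gt0.
  exists 1; split; first exact: ltr01.
  by move=> x t cx ct hx ht; rewrite mul1r; apply: act_Zbound.
- by move=> x y t _ _ _; apply: functional_extensionality => m; apply: act_mulAt.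
- move=> x _ hx0; apply: functional_extensionality => p.
  apply: functional_extensionality => q.
  have hsum r : \sum_(j < (p + q).+1) x (p + q - j)%N j * prim_weight j r = 0.
    by rewrite -act_indicator hx0.
  have hq : (q < (p + q).+1)%N by rewrite ltnS leq_addl.
  have := prim_weight_lin_indep (a := fun j => x (p + q - j)%N j) hsum hq.
  by rewrite addnK.
Qed.
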